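(* Let $\mathcal M$ be a time-dependent finite-horizon MDP accessed through the quantum oracle $O_{\mathcal{QM}}$, and let $\delta\in(0,1)$. Run the algorithm QVI-1 described in the context. Then, with probability at least $1-\delta$, its outputs satisfy $\hat V_0=V_0^*$ and $\hat\pi$ is an optimal policy, i.e. $V_0^{\hat\pi}=V_0^*$.
   Context: Write $[H]=\{0,\dots,H-1\}$. The MDP $\mathcal M=(\mathcal S,\mathcal A,\{P_h\}_{h\in[H]},\{r_h\}_{h\in[H]},H)$ has finite state space $\mathcal S$ with $S=|\mathcal S|$, finite action space $\mathcal A$ with $A=|\mathcal A|$, rewards $r_h(s,a)\in[0,1]$, and transition distributions $P_h(\cdot\mid s,a)$. Write $P_{h|s,a}\in\mathbb R^{\mathcal S}$ for the vector $(P_h(s'\mid s,a))_{s'}$. A policy is a map $\pi:\mathcal S\times[H]\to\mathcal A$. Its value function is $V_h^\pi(s)=\mathbb E[\sum_{t=h}^{H-1}r_t(s_t,a_t)\mid s_h=s]$, with $a_t=\pi(s_t,t)$ and $s_{t+1}\sim P_t(\cdot\mid s_t,a_t)$. The optimal value is $V_h^*=\max_\pi V_h^\pi$, and $\pi$ is optimal if $V_0^\pi=V_0^*$. Real numbers are stored in fixed-point binary with enough qubits that no overflow occurs; $\overline{x}$ denotes the stored binary representation of $x$. For a vector $f\in\mathbb R^N$, a binary oracle is a unitary $|i\rangle|0\rangle\mapsto|i\rangle|\overline{f(i)}\rangle$. The quantum oracle of $\mathcal M$ is the unitary $O_{\mathcal{QM}}:|s\rangle|a\rangle|h\rangle|s'\rangle|0\rangle|0\rangle\mapsto|s\rangle|a\rangle|h\rangle|s'\rangle|\overline{r_h(s,a)}\rangle|\overline{P_h(s'\mid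 s,a)}\rangle$. QMS (quantum maximum searching) is a subroutine with the following guarantee: given a binary oracle for $f\in\mathbb R^N$ and a parameter $\zeta>0$, it outputs an index $i$ with $f(i)=\max_j f(j)$ with probability at least $1-\zeta$, using at most $\tilde c\sqrt N\log(1/\zeta)$ queries to the oracle, where $\tilde c>0$ is a constant. Algorithm QVI-1$(\mathcal M,\delta)$: - Set $\zeta=\delta/(SH)$ and $\hat V_H=\mathbf 0$. - For $h=H-1,\dots,0$: - Build a binary oracle for the classical vector $\hat V_{h+1}$. - For each $s\in\mathcal S$, build (using $O_{\mathcal{QM}}$ and that oracle) a binary oracle for the vector $\hat Q_{h,s}\in\mathbb R^{\mathcal A}$, where $\hat Q_{h,s}(a)=r_h(s,a)+P_{h|s,a}^{\mathrm T}\hat V_{h+1}$. - For each $s$, set $\hat\pi(s,h)$ to the output of QMS with failure parameter $\zeta$ on $\{\hat Q_{h,s}(a):a\in\mathcal A\}$. - For each $s$, set $\hat V_h(s)=\hat Q_{h,s}(\hat\pi(s,h))$. - Return $\hat\pi$ and $\hat V_0$. *)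

From mathcomp Require Import all_boot all_order all_algebra.
Set Implicit Arguments. Unset Strict Implicit. Unset Printing Implicit Defensive.
Import Order.TTheory GRing.Theory Num.Theory.
Local Open Scope ring_scope.

Section MDP.
Variables (R : realFieldType) (S A : finType) (H : nat).
(* r h s a = r_h(s,a);  P h s a s' = P_h(s' | s, a) *)
Variables (r : 'I_H -> S -> A -> R) (P : 'I_H -> S -> A -> S -> R).

(* A (deterministic, time-dependent) policy pi(s,h) : pi h s. *)
Definition policy := {ffun 'I_H -> {ffun S -> A}}.

Definition Qval (h : 'I_H) (V : S -> R) (s : S) (a : A) : R :=
  r h s a + \sum_(s' : S) P h s a s' * V s'.

(* V_h^pi (with V_H^pi = 0): backward unrolling of the expectation,
   applying the step for time H-1 innermost, ..., time h outermost. *)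
Definition Vpi (pi : policy) (h : nat) : S -> R :=
  foldr (fun (i : 'I_H) (V : S -> R) (s : S) => Qval i V s (pi i s))
        (fun _ => 0) [seq i <- enum 'I_H | (h <= nat_of_ord i)%N].

Definition Vstar (h : nat) (s : S) : R :=
  \big[Num.max/0]_(pi : policy) Vpi pi h s.

(* ---- Algorithm QVI-1 ----
   c h s is the output of the QMS call for (h, s), i.e. c = hat pi. *)
Definition Vhat (c : policy) (h : nat) : S -> R :=
  foldr (fun (i : 'I_H) (Vnext : S -> R) (s : S) =>
           (* hat Q_{i,s}(a) = Qval i Vnext s a ; hat V_i(s) = hat Q_{i,s}(hat pi(s,i)) *)
           Qval i Vnext s (c i s))
        (fun _ => 0) [seq i <- enum 'I_H | (h <= nat_of_ord i)%N].

Definition Qhat (c : policy) (h : 'I_H) (s : S) : A -> R :=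
  Qval h (Vhat c h.+1) s.

(* qms f z a = probability that QMS, run on the vector f with failure
   parameter z, outputs index a. *)
Definition is_argmax (f : A -> R) (a : A) : bool := [forall b, f b <= f a].

Definition QMS_spec (qms : (A -> R) -> R -> A -> R) : Prop :=
  forall (f : A -> R) (z : R),
    (forall a, 0 <= qms f z a) /\ \sum_(a : A) qms f z a = 1 /\
    (0 < z -> 1 - z <= \sum_(a : A | is_argmax f a) qms f z a).

(* Probability that the QMS outputs of QVI-1 are exactly c: each call is an
   independent run of QMS on the vector built from the (already computed)
   hat V_{h+1}. *)
Definition QVI1_prob (qms : (A -> R) -> R -> A -> R) (zeta : R) (c : policy) : R :=
  \prod_(h : 'I_H) \prod_(s : S) qms (Qhat c h s) zeta (c h s).

Definition QVI1_zeta (delta : R) : R := delta / (#|S|%:R * H%:R).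

Definition QVI1_success (c : policy) : bool :=
  [forall s, (Vhat c 0 s == Vstar 0 s) && (Vpi c 0 s == Vstar 0 s)].

End MDP.

(* QVI-1 makes its QMS calls backwards in time, and the vector passed to a
   call of step k depends only on the actions already returned for the steps
   after k.  Hence, whatever those actions were, the |S| calls of step k all
   return greedy actions with probability at least (1 - zeta)^|S|; chaining
   these conditional bounds over the H steps shows that with probability at
   least (1 - zeta)^(|S| H) >= 1 - |S| H zeta = 1 - delta every returned action
   is greedy.  A policy that is greedy with respect to its own Q-values is
   optimal by backward induction, and hat V_0 is by construction the value of
   the returned policy. *)

From mathcomp Require Import all_boot all_order all_algebra.
From mathcomp Require Import lra.
From Stdlib Require Import FunctionalExtensionality.
Import Order.TTheory GRing.Theory Num.Theory.

Set Implicit Arguments.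
Unset Strict Implicit.
Unset Printing Implicit Defensive.
Local Open Scope ring_scope.

Lemma filter_enum_ord_geq (n m : nat) :
  map val [seq i <- enum 'I_n | (m <= nat_of_ord i)%N] = iota m (n - m).
Proof.
rewrite -filter_map val_enum_ord.
have [le_mn | lt_nm] := leqP m n; last first.
  rewrite (_ : n - m = 0)%N; last by apply/eqP; rewrite subn_eq0 ltnW.
  rewrite (@eq_in_filter _ _ pred0) ?filter_pred0 // => i.
  by rewrite mem_iota add0n => /andP[_ lt_in]; rewrite /= leqNgt (ltn_trans lt_in).
rewrite -{1}(subnKC le_mn) iotaD filter_cat add0n.
rewrite (@eq_in_filter _ _ pred0) => [|i]; last first.
  by rewrite mem_iota add0n => /andP[_ lt_im]; rewrite /= leqNgt lt_im.
rewrite filter_pred0 (@eq_in_filter _ _ predT) ?filter_predT // => i.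
by rewrite mem_iota => /andP[-> _].
Qed.

Lemma filter_enum_ord_geq_cons (n : nat) (k : 'I_n) :
  [seq i <- enum 'I_n | (k <= nat_of_ord i)%N] =
    k :: [seq i <- enum 'I_n | (k.+1 <= nat_of_ord i)%N].
Proof.
by apply: (inj_map val_inj); rewrite /= !filter_enum_ord_geq -(subnSK (ltn_ord k)).
Qed.

Lemma filter_enum_ord_geq_nil (n m : nat) :
  (n <= m)%N -> [seq i <- enum 'I_n | (m <= nat_of_ord i)%N] = [::].
Proof.
move=> le_nm; apply: (inj_map val_inj); rewrite filter_enum_ord_geq.
by move: le_nm; rewrite -subn_eq0 => /eqP ->.
Qed.

Lemma downward_ind (n : nat) (Q : nat -> Prop) :
  (forall h, (n <= h)%N -> Q h) -> (forall k : 'I_n, Q k.+1 -> Q k) ->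
  forall h, Q h.
Proof.
move=> Qend Qstep h; move: {2}(n - h)%N (leqnn (n - h)) => d.
elim: d h => [|d IHd] h le_d.
  by apply: Qend; rewrite -subn_eq0 -leqn0.
have [le_nh | lt_hn] := leqP n h; first exact: Qend.
apply: (Qstep (Ordinal lt_hn)); apply: IHd.
by rewrite subnS -ltnS prednK ?subn_gt0.
Qed.

Definition depends_from (X : finType) (n : nat) (T : Type)
    (F : {ffun 'I_n -> X} -> T) (m : nat) : Prop :=
  forall c c' : {ffun 'I_n -> X},
    (forall j : 'I_n, (m <= j)%N -> c j = c' j) -> F c = F c'.

Section BackwardChoice.
Variables (R : realFieldType) (X : finType) (n : nat).
Implicit Types (c : {ffun 'I_n -> X}) (W : 'I_n -> {ffun 'I_n -> X} -> R).

Definition fupd c (k : 'I_n) (x : X) : {ffun 'I_n -> X} :=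
  [ffun j => if j == k then x else c j].

Lemma fupd_same c k x : fupd c k x k = x.
Proof. by rewrite ffunE eqxx. Qed.

Lemma fupd_gt c (k j : 'I_n) x : (k < j)%N -> fupd c k x j = c j.
Proof.
by move=> lt_kj; rewrite ffunE; case: eqP => // eq_jk; rewrite eq_jk ltnn in lt_kj.
Qed.

Definition agree_from (m : nat) c c' : bool :=
  [forall j : 'I_n, (m <= j)%N ==> (c' j == c j)].

Lemma agree_fromP m c c' :
  reflect (forall j : 'I_n, (m <= j)%N -> c j = c' j) (agree_from m c c').
Proof.
apply: (iffP forallP) => [agr j le_mj | agr j]; last by apply/implyP => /agr ->.
by apply/esym/eqP; move/implyP: (agr j); apply.
Qed.

Lemma agree_from0 c c' : agree_from 0 c c' = (c' == c).
Proof.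
apply/agree_fromP/eqP => [agr | -> //]; apply/ffunP => j; exact/esym/agr.
Qed.

Lemma agree_from_fupd (k : 'I_n) x c c' :
  agree_from k.+1 c c' && (c' k == x) = agree_from k (fupd c k x) c'.
Proof.
apply/andP/agree_fromP => [[/agree_fromP agr /eqP <-] j | agr].
  rewrite leq_eqVlt => /orP[/eqP/val_inj -> | lt_kj]; first exact: fupd_same.
  by rewrite fupd_gt // agr.
split; last by rewrite -agr ?fupd_same.
by apply/agree_fromP => j lt_kj; rewrite -agr ?(ltnW lt_kj) // fupd_gt.
Qed.

Definition partial_mass W (m : nat) c : R :=
  \sum_(c' | agree_from m c c') \prod_(k : 'I_n | (k < m)%N) W k c'.

Lemma partial_mass_step W (k : 'I_n) c :
  (forall k : 'I_n, depends_from (W k) k) ->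
  partial_mass W k.+1 c = \sum_x W k (fupd c k x) * partial_mass W k (fupd c k x).
Proof.
move=> W_dep; rewrite /partial_mass (partition_big (fun c' => c' k) predT) //=.
apply: eq_bigr => x _; rewrite (eq_bigl _ _ (agree_from_fupd k x c)) big_distrr /=.
apply: eq_bigr => c' /agree_fromP agr.
rewrite (bigD1 k) ?ltnS //= (W_dep k _ _ agr); congr (_ * _).
by apply: eq_bigl => j; rewrite ltnS [RHS]ltn_neqAle andbC.
Qed.

(* Sequential choice of [c (n-1)], ..., [c 0]: [W k c] is the mass of the
   choice [c k] given the later ones, and a mass of at least [p] at every step
   leaves a total mass of at least [p ^+ n]. *)
Lemma backward_choice_mass_ge W (p : R) (x0 : X) :
  0 <= p -> (forall k c, 0 <= W k c) ->
  (forall k : 'I_n, depends_from (W k) k) ->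
  (forall (k : 'I_n) c, p <= \sum_x W k (fupd c k x)) ->
  p ^+ n <= \sum_c \prod_k W k c.
Proof.
move=> p_ge0 W_ge0 W_dep W_step.
suff mass_ge m : (m <= n)%N -> forall c, p ^+ m <= partial_mass W m c.
  rewrite (_ : \sum_c _ = partial_mass W n [ffun => x0]) ?mass_ge //.
  apply: eq_big => [c | c _]; last by apply: eq_bigl => k; rewrite ltn_ord.
  by apply/esym/agree_fromP => j; rewrite leqNgt ltn_ord.
elim: m => [_ c | m IHm lt_mn c].
  by rewrite /partial_mass (eq_bigl _ _ (agree_from0 c)) big_pred1_eq big_pred0.
rewrite -[m]/(nat_of_ord (Ordinal lt_mn)) partial_mass_step //= exprSr.
apply: le_trans (_ : \sum_x W _ (fupd c _ x) * p ^+ m <= _); last first.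
  by apply: ler_sum => x _; apply: ler_wpM2l => //; apply: IHm; apply: ltnW.
rewrite -big_distrl /= [leRHS]mulrC.
by apply: ler_wpM2l; rewrite ?exprn_ge0.
Qed.

End BackwardChoice.

Lemma bernoulli_ineq (R : realFieldType) (z : R) (n : nat) :
  z <= 1 -> 1 - n%:R * z <= (1 - z) ^+ n.
Proof.
move=> z_le1; elim: n => [|n IHn]; first by rewrite mul0r subr0 expr0.
have z1_ge0 : 0 <= 1 - z by rewrite subr_ge0.
rewrite exprSr; apply: le_trans (ler_wpM2r z1_ge0 IHn); rewrite -natr1.
have : 0 <= n%:R * z * z :> R by rewrite -mulrA mulr_ge0 ?ler0n // -expr2 sqr_ge0.
lra.
Qed.

Section Zeta.
Variables (R : realFieldType) (S : finType) (H : nat).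

Lemma QVI1_zeta_gt0 (delta : R) :
  0 < delta -> (0 < #|S|)%N -> (0 < H)%N -> 0 < QVI1_zeta S H delta.
Proof. by move=> delta_gt0 S_gt0 H_gt0; rewrite divr_gt0 // mulr_gt0 ?ltr0n. Qed.

Lemma QVI1_zeta_le (delta : R) : 0 <= delta -> QVI1_zeta S H delta <= delta.
Proof.
move=> delta_ge0; rewrite /QVI1_zeta -natrM.
have [-> | N_gt0] := posnP (#|S| * H); first by rewrite invr0 mulr0.
by rewrite ler_pdivrMr ?ltr0n // ler_peMr ?ler1n.
Qed.

Lemma QVI1_zeta_pow_ge (delta : R) :
  0 <= delta <= 1 -> 1 - delta <= (1 - QVI1_zeta S H delta) ^+ (#|S| * H).
Proof.
case/andP=> delta_ge0 delta_le1.
have [-> | N_gt0] := posnP (#|S| * H); first by rewrite expr0 lerBlDr lerDl.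
apply: le_trans (bernoulli_ineq _ _); last first.
  by rewrite (le_trans (QVI1_zeta_le delta_ge0)).
by rewrite /QVI1_zeta -natrM mulrC divfK // pnatr_eq0 -lt0n.
Qed.

End Zeta.

Section PolicyValue.
Variables (R : realFieldType) (S A : finType) (H : nat).
Variables (r : 'I_H -> S -> A -> R) (P : 'I_H -> S -> A -> S -> R).
Implicit Types (pi c : policy S A H).

Lemma Vhat_Vpi c : Vhat r P c = Vpi r P c.
Proof. by []. Qed.

Lemma VpiE pi (k : 'I_H) s :
  Vpi r P pi k s = Qval r P k (Vpi r P pi k.+1) s (pi k s).
Proof. by rewrite /Vpi filter_enum_ord_geq_cons. Qed.

Lemma Vpi_horizon pi h s : (H <= h)%N -> Vpi r P pi h s = 0.
Proof. by move=> le_Hh; rewrite /Vpi filter_enum_ord_geq_nil. Qed.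

Lemma Vpi_depends h s : depends_from (fun pi => Vpi r P pi h s) h.
Proof.
elim/(@downward_ind H): h s => [h le_Hh s pi pi' _ | k IHk s pi pi' agr].
  by rewrite !Vpi_horizon.
rewrite /= !VpiE (agr k) // /Qval; congr (_ + _); apply: eq_bigr => s' _.
by congr (_ * _); apply: IHk => j lt_kj; apply/agr/ltnW.
Qed.

Lemma Qhat_depends (k : 'I_H) s : depends_from (fun c => Qhat r P c k s) k.+1.
Proof.
move=> c c' agr; apply: functional_extensionality => a; rewrite /Qhat /Qval.
by congr (_ + _); apply: eq_bigr => s' _; congr (_ * _); apply: Vpi_depends.
Qed.

Definition greedy c : bool :=
  [forall k, forall s, is_argmax (Qhat r P c k s) (c k s)].

Hypothesis r_ge0 : forall h s a, 0 <= r h s a.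
Hypothesis P_ge0 : forall h s a s', 0 <= P h s a s'.

Lemma Vpi_ge0 pi h s : 0 <= Vpi r P pi h s.
Proof.
elim/(@downward_ind H): h s => [h le_Hh s | k IHk s]; first by rewrite Vpi_horizon.
by rewrite VpiE addr_ge0 ?sumr_ge0 // => s' _; rewrite mulr_ge0.
Qed.

Lemma Vpi_le_greedy c pi h s : greedy c -> Vpi r P pi h s <= Vpi r P c h s.
Proof.
move=> /forallP c_greedy; elim/(@downward_ind H): h s => [h le_Hh s | k IHk s].
  by rewrite !Vpi_horizon.
rewrite !VpiE; apply: le_trans (_ : Qval r P k (Vpi r P c k.+1) s (pi k s) <= _).
  by rewrite lerD2l; apply: ler_sum => s' _; apply: ler_wpM2l.
by move/forallP: (c_greedy k) => /(_ s) /forallP; apply.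
Qed.

Lemma greedy_QVI1_success c : greedy c -> QVI1_success r P c.
Proof.
move=> c_greedy; apply/forallP => s; rewrite Vhat_Vpi andbb eq_le.
rewrite (le_bigmax _ (fun pi => Vpi r P pi 0 s)) /=.
by apply: bigmax_le => [|pi _]; [apply: Vpi_ge0 | apply: Vpi_le_greedy].
Qed.

End PolicyValue.

Section QMSCalls.
Variables (R : realFieldType) (S A : finType) (H : nat).
Variables (r : 'I_H -> S -> A -> R) (P : 'I_H -> S -> A -> S -> R).
Variables (qms : (A -> R) -> R -> A -> R) (z : R).
Hypothesis qms_spec : QMS_spec qms.
Implicit Types (c : policy S A H).

Lemma qms_ge0 f a : 0 <= qms f z a.
Proof. by case: (qms_spec f z) => ->. Qed.

Definition greedy_step_prob (k : 'I_H) c : R :=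
  \prod_s if is_argmax (Qhat r P c k s) (c k s)
          then qms (Qhat r P c k s) z (c k s) else 0.

Lemma greedy_step_prob_ge0 k c : 0 <= greedy_step_prob k c.
Proof. by apply: prodr_ge0 => s _; case: ifP => // _; apply: qms_ge0. Qed.

Lemma greedy_step_prob_depends (k : 'I_H) : depends_from (greedy_step_prob k) k.
Proof.
move=> c c' agr; have Qhat_eq s : Qhat r P c k s = Qhat r P c' k s.
  by apply: Qhat_depends => j /ltnW; apply: agr.
by apply: eq_bigr => s _; rewrite /= Qhat_eq (agr k).
Qed.

Lemma greedy_step_mass_ge (k : 'I_H) c :
  ((0 < #|S|)%N -> 0 < z) -> z <= 1 ->
  (1 - z) ^+ #|S| <= \sum_x greedy_step_prob k (fupd c k x).
Proof.
move=> z_gt0 z_le1; have Qhat_fupd x s : Qhat r P (fupd c k x) k s = Qhat r P c k s.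
  by apply: Qhat_depends => j lt_kj; rewrite fupd_gt.
rewrite /greedy_step_prob.
under eq_bigr => x _ do under eq_bigr => s _ do rewrite Qhat_fupd fupd_same.
rewrite -(bigA_distr_bigA (fun s a => if is_argmax (Qhat r P c k s) a
                                       then qms (Qhat r P c k s) z a else 0)).
rewrite -prodr_const; apply: ler_prod => s _; rewrite subr_ge0 z_le1 -big_mkcond /=.
have [_ [_ ->]] := qms_spec (Qhat r P c k s) z; rewrite // z_gt0 //.
by apply/card_gt0P; exists s.
Qed.

Hypothesis r_ge0 : forall h s a, 0 <= r h s a.
Hypothesis P_ge0 : forall h s a s', 0 <= P h s a s'.

Lemma prod_greedy_step_prob_le c :
  \prod_k greedy_step_prob k c <=
    if QVI1_success r P c then QVI1_prob r P qms z c else 0.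
Proof.
have [c_greedy | /forallPn[k /forallPn[s not_argmax]]] := boolP (greedy r P c).
  rewrite greedy_QVI1_success //; apply: ler_prod => k _.
  rewrite greedy_step_prob_ge0; apply: ler_prod => s _.
  by rewrite (forallP (forallP c_greedy k) s) qms_ge0 lexx.
rewrite (bigD1 k) //= /greedy_step_prob (bigD1 s) //= ifN // !mul0r.
by case: ifP => // _; do 2![apply: prodr_ge0 => ? _]; apply: qms_ge0.
Qed.

End QMSCalls.

Lemma QMS_spec_card_gt0 (R : realFieldType) (A : finType)
    (qms : (A -> R) -> R -> A -> R) :
  QMS_spec qms -> (0 < #|A|)%N.
Proof.
move=> qms_spec; rewrite lt0n; apply/negP => /eqP/card0_eq A_empty.
have [_ [qms_sum1 _]] := qms_spec (fun=> 0) 0.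
by move: qms_sum1; rewrite big_pred0 // => /eqP; rewrite eq_sym oner_eq0.
Qed.

Theorem theorem3p5 (R : realFieldType) (S A : finType) (H : nat)
  (r : 'I_H -> S -> A -> R) (P : 'I_H -> S -> A -> S -> R)
  (qms : (A -> R) -> R -> A -> R) (delta : R) :
  (forall h s a, 0 <= r h s a <= 1) ->
  (forall h s a s', 0 <= P h s a s') ->
  (forall h s a, \sum_(s' : S) P h s a s' = 1) ->
  QMS_spec qms ->
  0 < delta < 1 ->
  1 - delta <=
    \sum_(c : policy S A H | QVI1_success r P c)
       QVI1_prob r P qms (QVI1_zeta S H delta) c.
Proof.
move=> r_bnd P_ge0 _ qms_spec /andP[delta_gt0 delta_lt1].
have r_ge0 h s a : 0 <= r h s a by case/andP: (r_bnd h s a).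
set z := QVI1_zeta S H delta.
have z_le1 : z <= 1 by rewrite (le_trans (QVI1_zeta_le S H (ltW delta_gt0))) ?ltW.
have [a0 _] := card_gt0P (QMS_spec_card_gt0 qms_spec).
apply: le_trans (QVI1_zeta_pow_ge S H _) _; first by rewrite !ltW.
rewrite exprM big_mkcond /=.
apply: le_trans (ler_sum _ _) => [|c _]; last exact: prod_greedy_step_prob_le.
apply: (backward_choice_mass_ge [ffun => a0]).
- by rewrite exprn_ge0 // subr_ge0.
- exact: greedy_step_prob_ge0.
- exact: greedy_step_prob_depends.
- move=> k c; apply: greedy_step_mass_ge => // S_gt0.
  by apply: QVI1_zeta_gt0 => //; apply: leq_ltn_trans (ltn_ord k).
Qed.
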